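(* Let $N\ge 2$, let $y_i,r_i$ ($1\le i\le N$) be real constants, let $\bm{x}_j=(|y_1+jr_1|,\dots,|y_N+jr_N|)^T$ for integers $j$, and for a set $J=\{j_1<\dots<j_N\}$ of integers let $U(J)=\max[\bm{x}_{j_1}\ \dots\ \bm{x}_{j_N}]$. Let $1\le k_1<k_2<k_3\le N+1$. If \[ U(\{1,\dots,N+1\}\setminus\{k_2\})+U(\{1,\dots,N+2\}\setminus\{k_1,k_3\})\ \ge\ U(\{1,\dots,N+1\}\setminus\{k_3\})+U(\{1,\dots,N+2\}\setminus\{k_1,k_2\}), \] then \[ U(\{1,\dots,N+1\}\setminus\{k_2\})+U(\{1,\dots,N+2\}\setminus\{k_1,k_3\}) =\max\Bigl(U(\{1,\dots,N+1\}\setminus\{k_3\})+U(\{1,\dots,N+2\}\setminus\{k_1,k_2\}),\ U(\{1,\dots,N+1\}\setminus\{k_1\})+U(\{1,\dots,N+2\}\setminus\{k_2,k_3\})\Bigr). \]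
   Context: Ultradiscrete permanent (UP): for a real $N\times N$ matrix $A=(a_{ij})$, $\max A\equiv\max_{\pi}\sum_{i=1}^N a_{i\pi(i)}$ over all permutations $\pi$ of $\{1,\dots,N\}$; $\max[\bm{b}_1\ \dots\ \bm{b}_N]$ denotes the UP of the matrix with columns $\bm{b}_1,\dots,\bm{b}_N$. *)

From mathcomp Require Import all_boot all_order all_algebra all_fingroup.
Set Implicit Arguments. Unset Strict Implicit. Unset Printing Implicit Defensive.
Import Order.TTheory GRing.Theory Num.Theory.
Local Open Scope ring_scope.

(* The max is taken with the identity term as the seed, which is one of
   the terms, so this is exactly the maximum over all permutations. *)
Definition updiag (R : realDomainType) (n : nat) (A : 'M[R]_n) (s : 'S_n) : R :=
  \sum_(i < n) A i (s i).

Definition uperm (R : realDomainType) (n : nat) (A : 'M[R]_n) : R :=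
  \big[Num.max/updiag A 1%g]_(s : 'S_n) updiag A s.

Definition xvec (R : realDomainType) (N : nat) (y r : 'I_N -> R) (j : int) (i : 'I_N) : R :=
  `|y i + j%:~R * r i|.

Definition idx_set (m : nat) (K : seq nat) : seq nat :=
  [seq j <- iota 1 m | j \notin K].

(* U(J) = max[x_{j_1} ... x_{j_N}] where J = {j_1 < ... < j_N} given as
   an increasing list; column c is x_{j_{c+1}} *)
Definition U (R : realDomainType) (N : nat) (y r : 'I_N -> R) (J : seq nat) : R :=
  uperm (\matrix_(i < N, c < N) xvec y r (nth 0%N J c)%:Z i).

From mathcomp Require Import all_boot all_order all_algebra all_fingroup.
From mathcomp Require Import zify.
Set Implicit Arguments. Unset Strict Implicit. Unset Printing Implicit Defensive.
Import Order.TTheory GRing.Theory Num.Theory.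
Local Open Scope ring_scope.

(* The permanent of a matrix whose columns carry labels J is the maximal weight
   of an injective assignment of rows to labels in J.  Take optimal assignments
   f onto {a,b} + S and g onto {c,d} + S and follow the alternating path that
   starts at the row f sends to a and continues with the row f sends to the
   value g took at the previous row.  Swapping f and g along this path keeps
   the total weight and yields assignments onto {b,x} + S and {a,x'} + S with
   {x,x'} = {c,d}: this is the tropical Plücker inequality
     U_ab + U_cd <= max (U_ac + U_bd, U_bc + U_ad).
   Write A for the left-hand sum of the claim and C, E for the two sums in
   the max.  With S = {1..N+1} minus {k1,k2,k3}, the quadruples
   (k1,k3 | k2,N+2) and (k2,k3 | k1,N+2) give A <= max C E and E <= max C A,
   which together with C <= A force A = max C E.  The particular entries
   |y_i + j r_i| play no role. *)

Lemma leq_size_injective (T : eqType) n (h : 'I_n -> T) (L : seq T) :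
  injective h -> (forall i, h i \in L) -> (n <= size L)%N.
Proof.
move=> inj_h h_mem; rewrite -(size_enum_ord n) -(size_map h).
apply: uniq_leq_size => [|_ /mapP [i _ ->] //].
by rewrite map_inj_uniq ?enum_uniq.
Qed.

Lemma injective_hits (T : eqType) n (h : 'I_n -> T) (X L : seq T) :
  injective h -> (forall i, h i \in X ++ L) -> (size L < n)%N ->
  exists i, h i \in X.
Proof.
move=> inj_h h_mem ltLn.
case: (pickP (fun i => h i \in X)) => [i | hX]; first by exists i.
suff : (n <= size L)%N by rewrite leqNgt ltLn.
by apply: leq_size_injective inj_h _ => i; have := h_mem i; rewrite mem_cat hX.
Qed.

Lemma connect_last_step (T : finType) (e : rel T) x y :
  connect e x y -> x != y -> exists2 z, connect e x z & e z y.
Proof.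
case/connectP => p + ->; elim/last_ind: p => [|p z _] /=; first by rewrite eqxx.
rewrite rcons_path last_rcons => /andP [x_p e_z] _.
by exists (last x p) => //; apply/connectP; exists p.
Qed.

Definition swap_on (T : Type) n (Q : pred 'I_n) (f g : 'I_n -> T) i :=
  if Q i then g i else f i.

Lemma swap_on_inj (T : eqType) n (Q : pred 'I_n) (f g : 'I_n -> T) :
  injective f -> injective g -> (forall i j, Q i -> g i = f j -> Q j) ->
  injective (swap_on Q f g).
Proof.
move=> inj_f inj_g closed_Q i j; rewrite /swap_on.
case Qi: (Q i); case Qj: (Q j);
  [exact: inj_g | move=> gf | move=> fg | exact: inj_f].
- by move: (closed_Q _ _ Qi gf); rewrite Qj.
- by move: (closed_Q _ _ Qj (esym fg)); rewrite Qi.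
Qed.

Lemma injective_pair_split (T : eqType) n (u v : 'I_n -> T) (a b x x' : T)
    (S : seq T) :
  injective u -> injective v -> (size S + 2 = n)%N ->
  (forall i, u i \in [:: b, x, x' & S]) ->
  (forall i, v i \in [:: a, x, x' & S]) ->
  (forall i j, u i \in [:: x; x'] -> u i != v j) -> (exists j, u j = x) ->
  (forall i, u i \in [:: b, x & S]) /\ (forall i, v i \in [:: a, x' & S]).
Proof.
move=> inj_u inj_v size_S u_mem v_mem unshared [j u_j].
have v_neq_x k : v k != x.
  by rewrite eq_sym -u_j; apply: unshared; rewrite u_j inE eqxx.
have u_neq_x' i : u i != x'.
  apply/eqP => u_i.
  have v_neq_x' k : v k != x'.
    by rewrite eq_sym -u_i; apply: unshared; rewrite u_i !inE eqxx orbT.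
  suff : (n <= size (a :: S))%N by rewrite -size_S /= addn2 ltnn.
  apply: leq_size_injective inj_v _ => k; move: (v_mem k).
  by rewrite !inE (negbTE (v_neq_x k)) (negbTE (v_neq_x' k)).
split=> i.
- by move: (u_mem i); rewrite !inE (negbTE (u_neq_x' i)).
- by move: (v_mem i); rewrite !inE (negbTE (v_neq_x i)).
Qed.

Section Exchange.

Variables (T : eqType) (n : nat) (f g : 'I_n -> T) (a b c d : T) (S : seq T).
Hypotheses (inj_f : injective f) (inj_g : injective g).
Hypothesis f_mem : forall i, f i \in [:: a, b & S].
Hypothesis g_mem : forall i, g i \in [:: c, d & S].
Hypotheses (uniq_abcdS : uniq [:: a, b, c, d & S]) (size_S : (size S + 2 = n)%N).

Let g_notin_ab i : g i \notin [:: a; b].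
Proof.
move: uniq_abcdS; rewrite -[[:: a, b, c, d & S]]/([:: a; b] ++ [:: c, d & S]).
by rewrite cat_uniq => /and3P [_ /hasPn disj _]; apply: disj.
Qed.

Let f_notin_cd i : f i \notin [:: c; d].
Proof.
move: uniq_abcdS; rewrite -[[:: a, b, c, d & S]]/([:: a; b] ++ [:: c; d] ++ S).
by rewrite uniq_catCA cat_uniq => /and3P [_ /hasPn disj _]; apply: disj.
Qed.

Let a_neq_b : a != b.
Proof. by move: uniq_abcdS => /andP []; rewrite inE negb_or => /andP []. Qed.

Section AlternatingPath.

Variable i0 : 'I_n.
Hypothesis f_i0 : f i0 = a.

Let Q := connect (fun i j => g i == f j) i0.

Let Q_step i j : Q i -> g i = f j -> Q j.
Proof. by move=> Qi gf; apply: connect_trans Qi (connect1 _); apply/eqP. Qed.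

Let Q_pred i : Q i -> i0 != i -> exists2 k, Q k & g k = f i.
Proof. by move=> Qi /(connect_last_step Qi) [k Qk /eqP]; exists k. Qed.

Let Q_back i j : Q i -> f i = g j -> Q j.
Proof.
move=> Qi fg; have [i0i | ] := eqVneq i0 i.
  by move: (g_notin_ab j); rewrite -fg -i0i f_i0 inE eqxx.
by case/(Q_pred Qi) => k Qk; rewrite fg => /inj_g <-.
Qed.

Lemma swap_connect_mem i : swap_on Q f g i \in [:: b, c, d & S].
Proof.
rewrite /swap_on; case Qi: (Q i).
  by move: (g_mem i); rewrite !inE => ->; rewrite orbT.
move: (f_mem i); rewrite !inE => /or3P [/eqP fa | -> | ->]; rewrite ?orbT //.
by move: Qi; rewrite (inj_f (etrans fa (esym f_i0))) /Q connect0.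
Qed.

Lemma swap_connect_mem' i : swap_on Q g f i \in [:: a, c, d & S].
Proof.
rewrite /swap_on; case Qi: (Q i); last first.
  by move: (g_mem i); rewrite !inE => ->; rewrite orbT.
move: (f_mem i); rewrite !inE => /or3P [-> | /eqP fb | ->]; rewrite ?orbT //.
have [i0i | /(Q_pred Qi) [k _ gk]] := eqVneq i0 i.
  by move: a_neq_b; rewrite -f_i0 -fb i0i eqxx.
by move: (g_notin_ab k); rewrite gk fb !inE eqxx orbT.
Qed.

Lemma swap_connect_inj : injective (swap_on Q f g).
Proof. exact: swap_on_inj Q_step. Qed.

Lemma swap_connect_inj' : injective (swap_on Q g f).
Proof. exact: swap_on_inj Q_back. Qed.

End AlternatingPath.

Lemma exchange_assignments : exists Q : pred 'I_n,
  [/\ injective (swap_on Q f g), injective (swap_on Q g f) &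
    (forall i, swap_on Q f g i \in [:: b, c & S]) /\
      (forall i, swap_on Q g f i \in [:: a, d & S]) \/
    (forall i, swap_on Q f g i \in [:: b, d & S]) /\
      (forall i, swap_on Q g f i \in [:: a, c & S])].
Proof.
have [i0] : exists i0, f i0 \in [:: a].
  by apply: (injective_hits (L := b :: S)) inj_f _ _; rewrite // -size_S addn2.
rewrite inE => /eqP f_i0.
pose Q := connect (fun i j => g i == f j) i0; exists Q.
set u := swap_on Q f g; set v := swap_on Q g f.
have inj_u : injective u by apply: swap_connect_inj.
have inj_v : injective v by apply: swap_connect_inj'.
have u_mem i : u i \in [:: b, c, d & S] by apply: swap_connect_mem.
have v_mem i : v i \in [:: a, c, d & S] by apply: swap_connect_mem'.
have unshared i j : u i \in [:: c; d] -> u i != v j.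
  rewrite /u /v /swap_on; case Qi: (Q i); last by rewrite (negbTE (f_notin_cd i)).
  move=> g_cd; apply/eqP; case Qj: (Q j).
    by move=> gf; move: (f_notin_cd j); rewrite -gf g_cd.
  by move=> /inj_g ij; move: Qj; rewrite -ij Qi.
split=> //.
have [j] : exists j, u j \in [:: c; d].
  apply: (injective_hits (L := b :: S)) inj_u _ _; last by rewrite -size_S addn2.
  by move=> i; have := u_mem i; rewrite !inE; case/or4P=> ->; rewrite ?orbT.
rewrite !inE => /orP [] /eqP u_j; [left | right].
  apply: injective_pair_split inj_u inj_v size_S u_mem v_mem unshared _.
  by exists j.
apply: injective_pair_split inj_u inj_v size_S _ _ _ _ => [i | i | i k | ].
- by have := u_mem i; rewrite !inE; case/or4P=> ->; rewrite ?orbT.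
- by have := v_mem i; rewrite !inE; case/or4P=> ->; rewrite ?orbT.
- by rewrite mem_seq2 orbC -mem_seq2; apply: unshared.
- by exists j.
Qed.

End Exchange.

Lemma updiag_le_uperm (R : realDomainType) n (A : 'M[R]_n) s :
  updiag A s <= uperm A.
Proof. exact: le_bigmax. Qed.

Lemma uperm_attained (R : realDomainType) n (A : 'M[R]_n) :
  exists s, uperm A = updiag A s.
Proof.
rewrite /uperm; elim/big_ind: _ => [| _ _ [s ->] [t ->] | s _]; try by eexists.
by rewrite maxEle; case: ifP; eexists.
Qed.

Definition enumerates n (J X : seq nat) := [/\ uniq J, size J = n & J =i X].

Section ColumnAssignments.

Variables (R : realDomainType) (n : nat) (w : 'I_n -> nat -> R).

Definition upcol (J : seq nat) : R :=
  uperm (\matrix_(i < n, c < n) w i (nth 0%N J c)).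

Definition assignment_weight (h : 'I_n -> nat) : R := \sum_i w i (h i).

Lemma updiag_upcol J s :
  updiag (\matrix_(i < n, c < n) w i (nth 0%N J c)) s =
  assignment_weight (fun i => nth 0%N J (s i)).
Proof. by apply: eq_bigr => i _; rewrite mxE. Qed.

Lemma assignment_weight_le_upcol J h : size J = n ->
  injective h -> (forall i, h i \in J) -> assignment_weight h <= upcol J.
Proof.
move=> size_J inj_h h_mem.
have index_lt i : (index (h i) J < n)%N by rewrite -size_J index_mem.
have inj_index : injective (fun i => Ordinal (index_lt i)).
  move=> i j [] /(congr1 (nth 0%N J)); rewrite !nth_index //; exact: inj_h.
apply: le_trans (updiag_le_uperm _ (perm inj_index)).
rewrite updiag_upcol le_eqVlt; apply/orP; left; apply/eqP.
by apply: eq_bigr => i _; rewrite permE /= nth_index.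
Qed.

Lemma upcol_attained J : uniq J -> size J = n ->
  exists h, [/\ injective h, forall i, h i \in J & upcol J = assignment_weight h].
Proof.
move=> uniq_J size_J; rewrite /upcol.
have [s ->] := uperm_attained (\matrix_(i < n, c < n) w i (nth 0%N J c)).
exists (fun i => nth 0%N J (s i)); split; last exact: updiag_upcol.
- by move=> i j /eqP; rewrite nth_uniq ?size_J // => /eqP /val_inj /perm_inj.
- by move=> i; rewrite mem_nth ?size_J.
Qed.

Lemma assignment_weight_swap (Q : pred 'I_n) f g :
  assignment_weight (swap_on Q f g) + assignment_weight (swap_on Q g f) =
  assignment_weight f + assignment_weight g.
Proof.
rewrite -!big_split; apply: eq_bigr => i _ /=; rewrite /swap_on.
by case: (Q i); rewrite // addrC.
Qed.

Lemma upcol_plucker (a b c d : nat) S Jab Jcd Jac Jbd Jbc Jad :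
  uniq [:: a, b, c, d & S] -> (size S + 2 = n)%N ->
  enumerates n Jab [:: a, b & S] -> enumerates n Jcd [:: c, d & S] ->
  enumerates n Jac [:: a, c & S] -> enumerates n Jbd [:: b, d & S] ->
  enumerates n Jbc [:: b, c & S] -> enumerates n Jad [:: a, d & S] ->
  upcol Jab + upcol Jcd <=
    Num.max (upcol Jac + upcol Jbd) (upcol Jbc + upcol Jad).
Proof.
move=> uniq_abcdS size_S [uab sab eab] [ucd scd ecd] [_ sac eac] [_ sbd ebd]
  [_ sbc ebc] [_ sad ead].
have [f [inj_f f_mem ->]] := upcol_attained uab sab.
have [g [inj_g g_mem ->]] := upcol_attained ucd scd.
have f_mem' i : f i \in [:: a, b & S] by rewrite -eab.
have g_mem' i : g i \in [:: c, d & S] by rewrite -ecd.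
have [Q [inj_u inj_v [[u_mem v_mem] | [u_mem v_mem]]]] :=
  exchange_assignments inj_f inj_g f_mem' g_mem' uniq_abcdS size_S.
all: rewrite -(assignment_weight_swap Q) le_max; apply/orP.
- right; apply: lerD; apply: assignment_weight_le_upcol => // i.
    by rewrite ebc.
  by rewrite ead.
- left; rewrite addrC; apply: lerD; apply: assignment_weight_le_upcol => // i.
    by rewrite eac.
  by rewrite ebd.
Qed.

End ColumnAssignments.

Lemma eq_max_sandwich (R : realDomainType) (x y z : R) :
  y <= x -> x <= Num.max y z -> z <= Num.max y x -> x = Num.max y z.
Proof.
move=> le_yx le_x_max; rewrite le_max => /orP le_z; apply/eqP.
by rewrite eq_le le_x_max ge_max le_yx; case: le_z => // /le_trans; apply.
Qed.

Lemma mem_idx_set m K j : (j \in idx_set m K) = (j \notin K) && (1 <= j <= m)%N.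
Proof. by rewrite mem_filter mem_iota add1n ltnS. Qed.

Lemma uniq_idx_set m K : uniq (idx_set m K).
Proof. by rewrite filter_uniq // iota_uniq. Qed.

Lemma size_idx_set m K : uniq K -> all (fun k => 1 <= k <= m)%N K ->
  size (idx_set m K) = (m - size K)%N.
Proof.
move=> uK /allP K_range; rewrite size_filter.
have <- : count (mem K) (iota 1 m) = size K.
  rewrite -size_filter; apply/perm_size/uniq_perm;
    rewrite ?filter_uniq ?iota_uniq //.
  by move=> k; rewrite mem_filter mem_iota add1n ltnS andb_idr // => /K_range.
by rewrite -[X in (X - _)%N](size_iota 1 m) -(count_predC (mem K)) addKn.
Qed.

Lemma idx_set_enumerates m K n X : uniq K -> all (fun k => 1 <= k <= m)%N K ->
  (size K + n = m)%N -> idx_set m K =i X -> enumerates n (idx_set m K) X.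
Proof.
move=> uK K_range size_K eX.
by split; rewrite ?uniq_idx_set ?size_idx_set // -size_K addKn.
Qed.

Theorem lemma1 (R : realFieldType) (N : nat) (hN : (2 <= N)%N)
  (y r : 'I_N -> R) (k1 k2 k3 : nat)
  (hk1 : (1 <= k1)%N) (hk12 : (k1 < k2)%N) (hk23 : (k2 < k3)%N)
  (hk3 : (k3 <= N.+1)%N) :
  U y r (idx_set N.+1 [:: k2]) + U y r (idx_set N.+2 [:: k1; k3])
    >= U y r (idx_set N.+1 [:: k3]) + U y r (idx_set N.+2 [:: k1; k2]) ->
  U y r (idx_set N.+1 [:: k2]) + U y r (idx_set N.+2 [:: k1; k3])
    = Num.max (U y r (idx_set N.+1 [:: k3]) + U y r (idx_set N.+2 [:: k1; k2]))
              (U y r (idx_set N.+1 [:: k1]) + U y r (idx_set N.+2 [:: k2; k3])).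
Proof.
pose w i j := xvec y r j%:Z i. (* [U y r] is [upcol w] by definition *)
set S := idx_set N.+2 [:: k1; k2; k3; N.+2].
have size_S : (size S + 2 = N)%N by rewrite size_idx_set /= ?inE; lia.
have uniq_S : uniq S := uniq_idx_set _ _.
move=> le_CA; apply: (eq_max_sandwich le_CA);
  [apply: (@upcol_plucker _ _ w k1 k3 k2 N.+2 S) |
   apply: (@upcol_plucker _ _ w k2 k3 k1 N.+2 S)] => //.
all: first [by rewrite /= uniq_S /S !inE !mem_idx_set !inE !eqxx /=; lia |
  apply: idx_set_enumerates => /= [||| j];
  rewrite /S ?(inE, mem_idx_set, eqxx, andbT) /=; lia].
Qed.
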